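(* In the one-shot wage theft problem described in the context, fix an effort level $a\in[0,1)$ and let $(w_H^*,w_L^* )$ be the promised wages of an optimal solution of the problem restricted to effort level $a$. Then, with these wages and effort fixed, choosing thefts $b_i^*=\min\{\beta,w_i^*\}$ for $i\in\{H,L\}$ maximizes the employer's profit over all $b_H,b_L$ with $0\le b_i\le w_i^*$. Furthermore, if $a\in(0,1)$, then $b_i^*=\min\{\beta,w_i^*\}$, $i\in\{H,L\}$, is the unique optimal wage theft.
   Context: Fix $P>0$, $y_H>y_L\ge 0$, a real number $u$ (reservation utility) and $\gamma\in(0,1]$ (inspection probability). Let $C:[0,1)\to\mathbb{R}$ be the worker's effort cost: $C(0)=0$, $C$ increasing, strictly convex, twice differentiable, $C(a)\to\infty$ as $a\to1$. Let $\eta:[0,\infty)\to\mathbb{R}$ be the penalty: strictly convex, increasing, twice differentiable, $\eta(0)=0$. The one-shot wage theft problem is: choose $a,w_H,w_L,b_H,b_L$ to maximize the employer profit $a\,(Py_H-w_H+b_H-\gamma\eta(b_H))+(1-a)\,(Py_L-w_L+b_L-\gamma\eta(b_L))$ subject to (incentive compatibility) $a\in\arg\max_{a'\in[0,1)}\{a'w_H+(1-a')w_L-C(a')\}$; (individual rationality) $a w_H+(1-a)w_L-C(a)\ge u$; $w_H,w_L\ge 0$; $0\le b_L\le w_L$, $0\le b_H\le w_H$; $a\in[0,1)$. The problem restricted to effort level $a$ is the same problem with $a$ fixed. The principal's ideal wage theft $\beta\ge 0$ is the value with $\gamma\eta'(\beta)=1$ (assumed to exist). *)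

From Stdlib Require Import Reals Lra.
From Coquelicot Require Import Coquelicot.
Open Scope R_scope.

Definition is_derive_on (D : R -> Prop) (f f' : R -> R) : Prop :=
  forall x, D x ->
    filterlim (fun y => (f y - f x) / (y - x))
              (within (fun y => D y /\ y <> x) (locally x))
              (locally (f' x)).

Definition twice_diff_on (D : R -> Prop) (f : R -> R) : Prop :=
  exists f' f'', is_derive_on D f f' /\ is_derive_on D f' f''.

Definition nondecr_on (D : R -> Prop) (f : R -> R) : Prop :=
  forall x y, D x -> D y -> x <= y -> f x <= f y.

Definition strictly_convex_on (D : R -> Prop) (f : R -> R) : Prop :=
  forall x y t, D x -> D y -> x <> y -> 0 < t < 1 ->
    f (t * x + (1 - t) * y) < t * f x + (1 - t) * f y.

Definition dom_C (a : R) : Prop := 0 <= a < 1.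
Definition dom_eta (b : R) : Prop := 0 <= b.

Definition profit (P yH yL gamma : R) (eta : R -> R)
    (a wH wL bH bL : R) : R :=
  a * (P * yH - wH + bH - gamma * eta bH)
  + (1 - a) * (P * yL - wL + bL - gamma * eta bL).

Definition worker_util (C : R -> R) (a wH wL : R) : R :=
  a * wH + (1 - a) * wL - C a.

Definition IC (C : R -> R) (a wH wL : R) : Prop :=
  forall a', 0 <= a' < 1 -> worker_util C a' wH wL <= worker_util C a wH wL.

Definition feasible_at (u : R) (C : R -> R) (a wH wL bH bL : R) : Prop :=
  IC C a wH wL /\ worker_util C a wH wL >= u /\
  0 <= wH /\ 0 <= wL /\ 0 <= bL <= wL /\ 0 <= bH <= wH.

Definition optimal_at (P yH yL u gamma : R) (C eta : R -> R)
    (a wH wL bH bL : R) : Prop :=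
  feasible_at u C a wH wL bH bL /\
  forall wH' wL' bH' bL', feasible_at u C a wH' wL' bH' bL' ->
    profit P yH yL gamma eta a wH' wL' bH' bL'
      <= profit P yH yL gamma eta a wH wL bH bL.

(* Up to a term independent of the thefts, profit is
   [- (a * c bH + (1 - a) * c bL)] with [c b := gamma * eta b - b], which is
   strictly convex.  Since [c' beta = 0], the tangent line of [eta] at [beta]
   shows that [beta] is the strict global minimiser of [c] on [[0, +oo)], so on
   [[0, w]] the strict minimiser is [Rmin beta w]: if [w < beta], convexity
   makes [c] strictly decreasing on [[0, beta]].  Both weights [a] and [1 - a]
   are nonnegative, and positive when [0 < a < 1], whence uniqueness. *)
From Stdlib Require Import Reals Lra.
From Coquelicot Require Import Coquelicot.
Open Scope R_scope.

Definition slope (f : R -> R) (x y : R) : R := (f y - f x) / (y - x).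

Lemma slope_sym (f : R -> R) (x y : R) : slope f x y = slope f y x.
Proof.
  unfold slope. destruct (Req_dec x y) as [<- | hxy].
  - reflexivity.
  - field. lra.
Qed.

Lemma slope_near_derivative (D : R -> Prop) (f d : R -> R) (p : R) :
  is_derive_on D f d -> D p ->
  forall eps, 0 < eps -> exists delta, 0 < delta /\
    forall y, D y -> y <> p -> Rabs (y - p) < delta ->
      Rabs (slope f p y - d p) < eps.
Proof.
  intros hd hp eps heps.
  destruct (hd p hp _ (locally_ball (d p) (mkposreal eps heps))) as [[delta hdelta] hnear].
  exists delta. split; [exact hdelta |].
  intros y hy hyp hyd. exact (hnear y hyd (conj hy hyp)).
Qed.

Section StrictlyConvex.

Variable f : R -> R.
Hypothesis hf : strictly_convex_on dom_eta f.

Lemma chord_above (x y z : R) :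
  0 <= x -> x < y < z -> (z - x) * f y < (z - y) * f x + (y - x) * f z.
Proof.
  intros hx hxyz.
  set (t := (z - y) / (z - x)).
  assert (ht : 0 < t < 1).
  { unfold t. split.
    - apply Rdiv_lt_0_compat; lra.
    - apply Rlt_div_l; lra. }
  assert (hy : t * x + (1 - t) * z = y) by (unfold t; field; lra).
  pose proof (hf x z t hx ltac:(unfold dom_eta; lra) ltac:(lra) ht) as hconv.
  rewrite hy in hconv.
  apply (Rmult_lt_compat_l (z - x)) in hconv; [| lra].
  replace ((z - x) * (t * f x + (1 - t) * f z))
    with ((z - y) * f x + (y - x) * f z) in hconv by (unfold t; field; lra).
  exact hconv.
Qed.

Lemma three_chord (x y z : R) :
  0 <= x -> x < y < z -> slope f x y < slope f x z < slope f y z.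
Proof.
  intros hx hxyz. pose proof (chord_above x y z hx hxyz).
  unfold slope. split.
  - apply Rlt_div_l; [lra |]. rewrite <- Rmult_div_swap. apply Rlt_div_r; lra.
  - apply Rlt_div_l; [lra |]. rewrite <- Rmult_div_swap. apply Rlt_div_r; lra.
Qed.

Lemma slope_increasing (p y z : R) :
  0 <= p -> 0 <= y -> y < z -> y <> p -> z <> p -> slope f p y < slope f p z.
Proof.
  intros hp hy hyz hyp hzp.
  destruct (Rlt_or_le p y) as [hpy | hyp'].
  - apply (three_chord p y z); lra.
  - destruct (Rlt_or_le z p) as [hzp' | hpz].
    + rewrite (slope_sym f p y), (slope_sym f p z). apply (three_chord y z p); lra.
    + rewrite (slope_sym f p y).
      pose proof (three_chord y p z hy ltac:(lra)). lra.
Qed.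

Variable d : R -> R.
Hypothesis hd : is_derive_on dom_eta f d.

Lemma derivative_le_slope (p x : R) : 0 <= p -> p < x -> d p <= slope f p x.
Proof.
  intros hp hpx. apply Rnot_lt_le. intros hlt.
  destruct (slope_near_derivative _ _ _ p hd hp (d p - slope f p x) ltac:(lra))
    as [delta [hdelta hnear]].
  set (y := p + Rmin delta (x - p) / 2).
  pose proof (Rmin_l delta (x - p)). pose proof (Rmin_r delta (x - p)).
  assert (hmin : 0 < Rmin delta (x - p)) by (apply Rmin_glb_lt; lra).
  assert (hyx : slope f p y < slope f p x)
    by (apply slope_increasing; unfold y; lra).
  assert (hyd : Rabs (y - p) < delta) by (unfold y; rewrite Rabs_right; lra).
  pose proof (hnear y ltac:(unfold dom_eta, y; lra) ltac:(unfold y; lra) hyd) as habs.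
  apply Rabs_def2 in habs. lra.
Qed.

Lemma slope_le_derivative (p x : R) : 0 <= x -> x < p -> slope f p x <= d p.
Proof.
  intros hx hxp. apply Rnot_lt_le. intros hlt.
  destruct (slope_near_derivative _ _ _ p hd ltac:(unfold dom_eta; lra)
              (slope f p x - d p) ltac:(lra)) as [delta [hdelta hnear]].
  set (y := p - Rmin delta (p - x) / 2).
  pose proof (Rmin_l delta (p - x)). pose proof (Rmin_r delta (p - x)).
  assert (hmin : 0 < Rmin delta (p - x)) by (apply Rmin_glb_lt; lra).
  assert (hxy : slope f p x < slope f p y)
    by (apply slope_increasing; unfold y; lra).
  assert (hyd : Rabs (y - p) < delta)
    by (unfold y; rewrite Rabs_left; lra).
  pose proof (hnear y ltac:(unfold dom_eta, y; lra) ltac:(unfold y; lra) hyd) as habs.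
  apply Rabs_def2 in habs. lra.
Qed.

Lemma tangent_below (p x : R) :
  0 <= p -> 0 <= x -> x <> p -> f p + d p * (x - p) < f x.
Proof.
  intros hp hx hxp.
  assert (hfx : f x = f p + slope f p x * (x - p)) by (unfold slope; field; lra).
  set (m := (p + x) / 2).
  destruct (Rlt_or_le p x) as [hpx | hxp'].
  - pose proof (derivative_le_slope p m hp ltac:(unfold m; lra)).
    pose proof (slope_increasing p m x hp ltac:(unfold m; lra)
                  ltac:(unfold m; lra) ltac:(unfold m; lra) hxp).
    rewrite hfx. apply Rplus_lt_compat_l, Rmult_lt_compat_r; lra.
  - pose proof (slope_le_derivative p m ltac:(unfold m; lra) ltac:(unfold m; lra)).
    pose proof (slope_increasing p x m hp hx ltac:(unfold m; lra) hxp
                  ltac:(unfold m; lra)).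
    rewrite hfx. apply Rplus_lt_compat_l. nra.
Qed.

End StrictlyConvex.

Lemma strict_argmin_on_interval (f : R -> R) (beta w x : R) :
  strictly_convex_on dom_eta f -> 0 <= beta ->
  (forall z, 0 <= z -> z <> beta -> f beta < f z) ->
  0 <= x <= w -> x <> Rmin beta w -> f (Rmin beta w) < f x.
Proof.
  intros hf hbeta hmin hx hne.
  unfold Rmin in *. destruct (Rle_dec beta w) as [hbw | hwb].
  - apply hmin; lra.
  - pose proof (chord_above f hf x w beta ltac:(lra) ltac:(lra)) as hchord.
    pose proof (hmin x ltac:(lra) ltac:(lra)).
    assert (hlt : (beta - x) * f w < (beta - x) * f x).
    { apply (Rlt_le_trans _ _ _ hchord).
      assert ((w - x) * f beta <= (w - x) * f x) by (apply Rmult_le_compat_l; lra).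
      lra. }
    apply Rmult_lt_reg_l in hlt; lra.
Qed.

Definition theft_cost (gamma : R) (eta : R -> R) (b : R) : R := gamma * eta b - b.

Lemma strictly_convex_theft_cost (gamma : R) (eta : R -> R) :
  0 < gamma -> strictly_convex_on dom_eta eta ->
  strictly_convex_on dom_eta (theft_cost gamma eta).
Proof.
  intros hgamma heta x y t hx hy hxy ht. unfold theft_cost.
  pose proof (Rmult_lt_compat_l gamma _ _ hgamma (heta x y t hx hy hxy ht)).
  lra.
Qed.

Lemma theft_cost_min_at_ideal (gamma beta : R) (eta deta : R -> R) :
  0 < gamma -> strictly_convex_on dom_eta eta -> is_derive_on dom_eta eta deta ->
  0 <= beta -> gamma * deta beta = 1 ->
  forall z, 0 <= z -> z <> beta -> theft_cost gamma eta beta < theft_cost gamma eta z.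
Proof.
  intros hgamma heta hdeta hbeta hbeta1 z hz hzb. unfold theft_cost.
  pose proof (Rmult_lt_compat_l gamma _ _ hgamma
                (tangent_below eta heta deta hdeta beta z hbeta hz hzb)) as htan.
  rewrite Rmult_plus_distr_l, <- Rmult_assoc, hbeta1 in htan.
  lra.
Qed.

Lemma profit_theft_split (P yH yL gamma : R) (eta : R -> R) (a wH wL bH bL : R) :
  profit P yH yL gamma eta a wH wL bH bL =
  a * (P * yH - wH) + (1 - a) * (P * yL - wL)
  - (a * theft_cost gamma eta bH + (1 - a) * theft_cost gamma eta bL).
Proof. unfold profit, theft_cost. ring. Qed.

Theorem proposition1
  (P yH yL u gamma : R) (C eta deta : R -> R) (beta : R)
  (hP : 0 < P) (hy : yH > yL) (hyL : yL >= 0)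
  (hgamma : 0 < gamma <= 1)
  (hC0 : C 0 = 0) (hCincr : nondecr_on dom_C C)
  (hCconv : strictly_convex_on dom_C C) (hCdiff : twice_diff_on dom_C C)
  (hClim : filterlim C (at_left 1) (Rbar_locally p_infty))
  (heta0 : eta 0 = 0) (hetaincr : nondecr_on dom_eta eta)
  (hetaconv : strictly_convex_on dom_eta eta)
  (hdeta : is_derive_on dom_eta eta deta)
  (hdeta2 : exists eta'', is_derive_on dom_eta deta eta'')
  (hbeta : 0 <= beta) (hbeta1 : gamma * deta beta = 1)
  (a wH wL bH bL : R) (ha : 0 <= a < 1)
  (hopt : optimal_at P yH yL u gamma C eta a wH wL bH bL) :
  (forall bH' bL', 0 <= bH' <= wH -> 0 <= bL' <= wL ->
     profit P yH yL gamma eta a wH wL bH' bL'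
       <= profit P yH yL gamma eta a wH wL (Rmin beta wH) (Rmin beta wL))
  /\
  (0 < a ->
   forall bH' bL', 0 <= bH' <= wH -> 0 <= bL' <= wL ->
     (forall bH'' bL'', 0 <= bH'' <= wH -> 0 <= bL'' <= wL ->
        profit P yH yL gamma eta a wH wL bH'' bL''
          <= profit P yH yL gamma eta a wH wL bH' bL') ->
     bH' = Rmin beta wH /\ bL' = Rmin beta wL).
Proof.
  destruct hopt as [[_ [_ [hwH [hwL _]]]] _].
  set (c := theft_cost gamma eta).
  assert (hargmin : forall w x, 0 <= x <= w -> x <> Rmin beta w -> c (Rmin beta w) < c x).
  { intros w x. apply strict_argmin_on_interval; trivial.
    - apply strictly_convex_theft_cost; [lra | exact hetaconv].
    - apply (theft_cost_min_at_ideal gamma beta eta deta); trivial; lra. }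
  assert (hargmin_le : forall w x, 0 <= x <= w -> c (Rmin beta w) <= c x).
  { intros w x hx. destruct (Req_dec x (Rmin beta w)) as [-> | hne].
    - apply Rle_refl.
    - left. exact (hargmin w x hx hne). }
  assert (hfeasible : forall w, 0 <= w -> 0 <= Rmin beta w <= w)
    by (intros w hw; split; [apply Rmin_glb; lra | apply Rmin_r]).
  split.
  - intros x y hx hy'. rewrite !profit_theft_split. fold c.
    pose proof (hargmin_le wH x hx). pose proof (hargmin_le wL y hy').
    nra.
  - intros ha0 x y hx hy' hmax. split.
    + destruct (Req_dec x (Rmin beta wH)) as [-> | hne]; [reflexivity | exfalso].
      pose proof (hmax _ _ (hfeasible wH hwH) hy') as hle.
      rewrite !profit_theft_split in hle. fold c in hle.
      pose proof (hargmin wH x hx hne). nra.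
    + destruct (Req_dec y (Rmin beta wL)) as [-> | hne]; [reflexivity | exfalso].
      pose proof (hmax _ _ hx (hfeasible wL hwL)) as hle.
      rewrite !profit_theft_split in hle. fold c in hle.
      pose proof (hargmin wL y hy' hne). nra.
Qed.
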